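(* Let $N\ge3$, $h>0$, and let $D$ be the periodic second-order central difference matrix ($D_{k,k+1}=\tfrac1{2h}$, $D_{k,k-1}=-\tfrac1{2h}$, indices mod $N$, all other entries zero). Let $J(\mathbf u)$ be the Jacobian of $\mathcal R_k(\mathbf u)=-2\sum_jD_{kj}F^\star_{\log}(u_k,u_j)$ with the logarithmic mean $F^\star_{\log}(u,v)=(v-u)/(\log v-\log u)$. Fix an index $i$, constants $\delta_+,\delta_->0$ with $\delta_+\ne\delta_-$, and constants $U_k>0$ for $k\notin\{i-1,i,i+1\}$. For $\varepsilon>0$ define $u^\varepsilon_i=\varepsilon$, $u^\varepsilon_{i\pm1}=\delta_\pm h+\varepsilon$, and $u^\varepsilon_k=U_k+\varepsilon$ otherwise. Then $|\operatorname{tr}(J(\mathbf u^\varepsilon)^2)|\to\infty$ and hence the spectral radius $\rho(J(\mathbf u^\varepsilon))\ge\sqrt{|\operatorname{tr}(J^2)|/N}\to\infty$ as $\varepsilon\to0^+$.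
   Context: The Jacobian is $J_{ik}=-2D_{ik}\partial_2F^\star(u_i,u_k)-2\delta_{ik}\sum_jD_{ij}\partial_1F^\star(u_i,u_j)$; explicitly with $r_j=u_j/u_i$, $J_{ij}=-2D_{ij}\frac{\log r_j-1+1/r_j}{\log^2 r_j}$ for $i\ne j$ and $J_{ii}=-2\sum_{k\ne i}D_{ik}\frac{r_k-\log r_k-1}{\log^2r_k}$. *)

From HB Require Import structures.
From mathcomp Require Import all_boot all_order all_algebra.
From mathcomp Require Import all_classical all_reals all_analysis.
From mathcomp Require Import complex.
Set Implicit Arguments.
Unset Strict Implicit.
Unset Printing Implicit Defensive.
Import Order.TTheory GRing.Theory Num.Theory.
Local Open Scope ring_scope.

Section Defs.
Variable R : realType.

Definition Dmat (N : nat) (h : R) : 'M[R]_N :=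
  \matrix_(k, j) (if j == ordS k then (2 * h)^-1
                  else if j == ord_pred k then - (2 * h)^-1 else 0).

Definition Flog (u v : R) : R :=
  if u == v then u else (v - u) / (ln v - ln u).

(* partial derivatives of F*_log w.r.t. first / second argument, with
   r = v/u; at r = 1 they take their (continuous) value 1/2 *)
Definition dFlog1 (u v : R) : R :=
  if u == v then 2^-1
  else let r := v / u in (r - ln r - 1) / (ln r) ^+ 2.
Definition dFlog2 (u v : R) : R :=
  if u == v then 2^-1
  else let r := v / u in (ln r - 1 + r^-1) / (ln r) ^+ 2.

Definition resid (N : nat) (h : R) (u : 'I_N -> R) (k : 'I_N) : R :=
  -2 * \sum_j Dmat N h k j * Flog (u k) (u j).

(* Jacobian of resid:
   J_ik = -2 D_ik d2F(u_i,u_k) - 2 delta_ik sum_j D_ij d1F(u_i,u_j) *)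
Definition Jac (N : nat) (h : R) (u : 'I_N -> R) : 'M[R]_N :=
  \matrix_(a, b) (-2 * Dmat N h a b * dFlog2 (u a) (u b)
                  - 2 * (a == b)%:R * \sum_j Dmat N h a j * dFlog1 (u a) (u j)).

Definition ueps (N : nat) (h : R) (i : 'I_N) (dp dm : R) (U : 'I_N -> R)
  (eps : R) : 'I_N -> R :=
  fun k => if k == i then eps
           else if k == ordS i then dp * h + eps
           else if k == ord_pred i then dm * h + eps
           else U k + eps.

Definition spectral_radius (n : nat) (A : 'M[R]_n) : R :=
  sup [set ComplexField.Normc.normc l | l in [set l : R[i] |
        eigenvalue (map_mx (fun x : R => x%:C%C) A) l]].

End Defs.

From HB Require Import structures.
From mathcomp Require Import all_boot all_order all_algebra.
From mathcomp Require Import all_classical all_reals all_analysis.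
From mathcomp Require Import complex spectral.
From mathcomp Require Import lra ring zify.
Set Implicit Arguments.
Unset Strict Implicit.
Unset Printing Implicit Defensive.

Import Order.TTheory GRing.Theory Num.Theory.
Import numFieldNormedType.Exports.
Local Open Scope classical_set_scope.
Local Open Scope ring_scope.

(* As [eps -> 0+] the diagonal entry [J_ii] is
   [-(1/h) (g (d+ h / eps) - g (d- h / eps))] with
   [g x = (x - ln (1 + x)) / ln (1 + x) ^ 2 ~ x / ln x ^ 2]; since [d+ <> d-] it is
   of order [1 / (eps ln (1/eps) ^ 2)], so [J_ii ^ 2] eventually exceeds a multiple
   of [eps ^ (-3/2)].  In [tr (J ^ 2) = sum_(a,b) J_ab J_ba] the other diagonal terms
   are squares, the off-diagonal products are bounded except [J_ij J_ji] for the
   neighbours [j] of [i], which are [O (1 / eps)].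
   A complex Schur form of [J] shows that [tr (J ^ 2)] is the sum of the squared
   eigenvalues, so [|tr (J ^ 2)| <= N rho(J) ^ 2]. *)

Section TriangularSpectrum.
Variable F : fieldType.

Lemma eigenvalue_conjumx n (P A : 'M[F]_n) l : P \in unitmx ->
  eigenvalue (conjmx P A) l = eigenvalue A l.
Proof.
move=> Pu; apply/idP/idP; first by apply: eigenvalue_conjmx;
  rewrite ?stablemx_unit ?row_free_unit.
have Pu' : invmx P \in unitmx by rewrite unitmx_inv.
rewrite -{1}(conjmxK A Pu) => Al; apply: (eigenvalue_conjmx _ _ Al);
  by rewrite ?stablemx_unit ?row_free_unit.
Qed.

Lemma eigenvalue_trig n (T : 'M[F]_n) l : is_trig_mx T ->
  eigenvalue T l = [exists k, l == T k k].
Proof.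
move=> Ttrig; rewrite eigenvalue_root_char char_poly_trig // rootE horner_prod.
apply/idP/existsP => [/prodf_eq0[k _]|[k /eqP->]].
  by rewrite !hornerE subr_eq0 => kl; exists k.
by rewrite (bigD1 k) //= !hornerE subrr mul0r.
Qed.

Lemma mxtrace_conjumx n (P A : 'M[F]_n) : P \in unitmx ->
  \tr (conjmx P A) = \tr A.
Proof. by move=> Pu; rewrite conjumx // mxtrace_mulC mulmxA mulVmx ?mul1mx. Qed.

End TriangularSpectrum.

Lemma mxtrace_sqr_trig (R : pzRingType) n (T : 'M[R]_n) : is_trig_mx T ->
  \tr (T *m T) = \sum_k T k k ^+ 2.
Proof.
move=> /is_trig_mxP Ttrig; apply: eq_bigr => k _; rewrite mxE (bigD1 k) //=.
rewrite big1 ?addr0 // => j jk.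
have [kj|jk'|/val_inj kj] := ltngtP k j; last by rewrite kj eqxx in jk.
  by rewrite Ttrig // mul0r.
by rewrite (Ttrig j k) // mulr0.
Qed.

Lemma mxtrace_sqr_ge (R : realDomainType) n (A : 'M[R]_n) i :
  A i i ^+ 2 - \sum_a \sum_(b | b != a) `|A a b * A b a| <= \tr (A *m A).
Proof.
have -> : \tr (A *m A) = \sum_a (A a a ^+ 2 + \sum_(b | b != a) A a b * A b a).
  by apply: eq_bigr => a _; rewrite mxE (bigD1 a) //= expr2.
have xnorm (x : R) : 0 <= x + `|x| by have := ler_norm (- x); rewrite normrN; lra.
rewrite lerBlDr -big_split /=.
apply: le_trans (_ : A i i ^+ 2 <= \sum_a A a a ^+ 2) _.
  by rewrite (bigD1 i) //= lerDl sumr_ge0 // => a _; rewrite sqr_ge0.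
apply: ler_sum => a _; rewrite -addrA lerDl -big_split.
by apply: sumr_ge0 => b _; exact: xnorm.
Qed.

Section SpectralRadius.
Local Open Scope complex_scope.
Variable R : realType.
Local Notation normc := (@ComplexField.Normc.normc R).

Lemma normc_ge0 (z : R[i]) : 0 <= normc z.
Proof. by case: z => a b /=; rewrite sqrtr_ge0. Qed.

Lemma normr_complex (z : R[i]) : `|z| = (normc z)%:C.
Proof. by case: z. Qed.

Lemma normr_real_complex (x : R) : `|x%:C| = `|x|%:C.
Proof. by rewrite normr_complex /= expr0n /= addr0 sqrtr_sqr. Qed.

Lemma real_Schur n (A : 'M[R]_n) : (0 < n)%N -> exists2 T : 'M[R[i]]_n,
    (\tr (A *m A))%:C = \sum_k T k k ^+ 2 &
    forall l, eigenvalue (map_mx (real_complex R) A) l = [exists k, l == T k k].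
Proof.
move=> n0; set Ac := map_mx _ A.
have [P /unitarymx_unit Pu PAtrig] := Schur Ac n0.
have Ttrig : is_trig_mx (conjmx P Ac) := PAtrig.
exists (conjmx P Ac).
  rewrite -(mxtrace_sqr_trig Ttrig) -conjmxM ?inE ?stablemx_unit //.
  by rewrite mxtrace_conjumx // -trace_map_mx map_mxM.
by move=> l; rewrite -(eigenvalue_trig _ Ttrig) eigenvalue_conjumx.
Qed.

Lemma spectral_radius_ge_diag n (A : 'M[R]_n) (T : 'M[R[i]]_n) :
  (forall l, eigenvalue (map_mx (real_complex R) A) l = [exists k, l == T k k]) ->
  forall k, normc (T k k) <= spectral_radius A.
Proof.
move=> eigA k.
have eigT j : [set normc l | l in [set l | eigenvalue (map_mx (real_complex R) A) l]]
    (normc (T j j)).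
  by exists (T j j) => //=; rewrite eigA; apply/existsP; exists j.
apply: sup_upper_bound (eigT k); split; first by exists (normc (T k k)).
exists (\sum_j normc (T j j)) => x [l /=]; rewrite eigA => /existsP[j /eqP-> <-].
by rewrite (bigD1 j) //= lerDl sumr_ge0 // => m _; apply: normc_ge0.
Qed.

Lemma sqrt_trace_sqr_le_spectral_radius n (A : 'M[R]_n) : (0 < n)%N ->
  Num.sqrt (`|\tr (A *m A)| / n%:R) <= spectral_radius A.
Proof.
move=> n0; have [T trA eigA] := real_Schur A n0.
have rhoT := spectral_radius_ge_diag eigA.
have rho0 : 0 <= spectral_radius A := le_trans (normc_ge0 _) (rhoT (Ordinal n0)).
have trA_le : `|\tr (A *m A)| <= n%:R * spectral_radius A ^+ 2.
  rewrite -lecR -normr_real_complex trA.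
  apply: le_trans (ler_norm_sum _ _ _) _.
  rewrite mulr_natl -[n in _ *+ n]card_ord -sumr_const rmorph_sum.
  apply: ler_sum => k _.
  by rewrite normrX normr_complex -rmorphXn lecR lerXn2r ?nnegrE ?normc_ge0.
rewrite -[X in _ <= X](ger0_norm rho0) -[X in _ <= X]sqrtr_sqr ler_sqrt ?sqr_ge0 //.
by rewrite ler_pdivrMr ?ltr0n // mulrC.
Qed.

Lemma spectral_radius_cvgy T (F : set_system T) (FF : Filter F) n
    (A : T -> 'M[R]_n) : (0 < n)%N ->
  `|\tr (A x *m A x)| @[x --> F] --> +oo -> spectral_radius (A x) @[x --> F] --> +oo.
Proof.
move=> n0 /cvgryPge trA; apply/cvgryPge => M.
apply: filterS (trA (n%:R * M ^+ 2)) => x trM.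
apply: le_trans (sqrt_trace_sqr_le_spectral_radius _ n0).
rewrite (le_trans (ler_norm M)) // -sqrtr_sqr ler_sqrt ?divr_ge0 //.
by rewrite ler_pdivlMr ?ltr0n // mulrC.
Qed.

End SpectralRadius.

Section CyclicNeighbours.
Variables (N : nat) (k : 'I_N).

Lemma ordS_neq : (1 < N)%N -> ordS k != k.
Proof.
move=> N1; have kN0 := ltn_ord k; apply/eqP => /(congr1 val) /=.
have [kN|kN|kN] := ltngtP k.+1 N; first by rewrite modn_small //; lia.
  by lia.
by rewrite kN modnn; lia.
Qed.

Lemma ord_pred_neq : (1 < N)%N -> ord_pred k != k.
Proof.
move=> N1; apply/eqP => k_pred; have := ordS_neq N1.
by rewrite -{1}k_pred ord_predK eqxx.
Qed.

Lemma ordS_neq_ord_pred : (2 < N)%N -> ordS k != ord_pred k.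
Proof.
move=> N2; have kN0 := ltn_ord k; apply/eqP => /(congr1 (@ordS N)).
rewrite ord_predK => /(congr1 val) /=; have [kN|kN|kN] := ltngtP k.+1 N.
- rewrite (modn_small kN); have [k2N|k2N|k2N] := ltngtP k.+2 N.
  + by rewrite modn_small //; lia.
  + by lia.
  + by rewrite k2N modnn; lia.
- by lia.
by rewrite kN modnn /= modn_small //; lia.
Qed.

End CyclicNeighbours.

Lemma cvg_near_normr_le (R : numFieldType) T (F : set_system T) (FF : Filter F)
    (f : T -> R) (l : R) : f @ F --> l -> \forall t \near F, `|f t| <= `|l| + 1.
Proof.
move/cvgrPdist_le => /(_ 1 ltr01); apply: filterS => t le1.
by rewrite -(subrKC l (f t)) (le_trans (ler_normD _ _)) // lerD2l distrC.
Qed.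

Section LogMeanDerivatives.
Variable R : realType.
Implicit Types c d e : R.

Lemma dFlog2_shift_cvg c d : 0 < c -> 0 < d ->
  dFlog2 (c + e) (d + e) @[e --> 0^'+] --> dFlog2 c d.
Proof.
move=> c0 d0; have [<-|cd] := eqVneq c d.
  have -> : (fun e => dFlog2 (c + e) (c + e)) = fun=> 2^-1.
    by apply/funext => e; rewrite /dFlog2 eqxx.
  by rewrite /dFlog2 eqxx; exact: cvg_cst.
pose phi r : R := (ln r - 1 + r^-1) / ln r ^+ 2.
have -> : (fun e => dFlog2 (c + e) (d + e)) = fun e => phi ((d + e) / (c + e)).
  by apply/funext => e; rewrite /dFlog2 (inj_eq (addIr e)) (negPf cd).
have r0 : 0 < d / c by rewrite divr_gt0.
have lnr0 : ln (d / c) != 0.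
  rewrite ln_eq0 //; apply: contra cd => /eqP dc1.
  by apply/eqP; rewrite -[d](divfK (lt0r_neq0 c0)) dc1 mul1r.
have ratio : (d + e) / (c + e) @[e --> 0] --> d / c.
  rewrite -[in X in _ --> X](addr0 c) -[in X in _ --> X](addr0 d).
  by apply: cvgM; [apply: cvgD|apply: cvgV; [rewrite addr0 gt_eqF|apply: cvgD]];
    rewrite ?addr0 //; exact: cvg_cst.
have phi_cont : phi r @[r --> d / c] --> phi (d / c).
  have ln_cont : ln r @[r --> d / c] --> ln (d / c) := continuous_ln r0.
  apply: cvgM; last by apply: cvgV; rewrite ?expf_neq0 // expr2; exact: cvgM.
  apply: cvgD; last by apply: cvgV; rewrite ?gt_eqF //.
  by apply: cvgB => //; exact: cvg_cst.
rewrite /dFlog2 (negPf cd); apply: cvg_at_right_filter.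
by rewrite -[X in _ --> X]/(phi (d / c)); apply: cvg_comp ratio phi_cont.
Qed.

Lemma ln1D_div_ge_near0 c K : 0 < c -> \forall e \near 0^'+, K <= ln (1 + c / e).
Proof.
move=> c0; near=> e.
have e0 : 0 < e by near: e; exact: nbhs_right_gt.
have e_lt : e < c / expR K by near: e; apply: nbhs_right_lt; rewrite divr_gt0 ?expR_gt0.
have K_lt : expR K < c / e by rewrite ltr_pdivlMr // mulrC -ltr_pdivlMr ?expR_gt0.
rewrite -[K]expRK ler_ln ?posrE ?expR_gt0 ?addr_gt0 ?divr_gt0 //.
by rewrite (le_trans (ltW K_lt)) // lerDr.
Unshelve. all: by end_near.
Qed.

(* with [x = c / e] and [L = ln (1 + x)], the factors are about [1 / L] and
   [x / L ^+ 2] *)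
Lemma dFlog2_shift0_mul_le c e : 0 < c -> 0 < e -> 1 <= ln (1 + c / e) ->
  `|dFlog2 e (c + e)| * `|dFlog2 (c + e) e| <= c / e.
Proof.
move=> c0 e0 L1; set x := c / e.
have x0 : 0 < x by rewrite divr_gt0.
have r_eq : (c + e) / e = 1 + x by rewrite mulrDl divff ?gt_eqF // addrC.
have r_eq' : e / (c + e) = (1 + x)^-1 by rewrite -r_eq invf_div.
have neq : (c + e == e) = false by rewrite -subr_eq0 addrK gt_eqF.
rewrite /dFlog2 [e == _]eq_sym neq r_eq r_eq' lnV ?posrE ?addr_gt0 // invrK sqrrN.
set L := ln (1 + x) in L1 *.
have Lx : L <= x by apply: le_ln1Dx; lra.
have inv_ge0 : 0 < (1 + x)^-1 by rewrite invr_gt0 addr_gt0.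
have inv_le1 : (1 + x)^-1 <= 1 by rewrite invf_le1 ?addr_gt0 //; lra.
have LL : 1 <= L ^+ 2 by rewrite expr2; nra.
have LL0 : 0 < L ^+ 2 by lra.
rewrite !normrM !ger0_norm ?invr_ge0 ?(ltW LL0) //; last by lra.
  rewrite -[X in _ <= X]mul1r; apply: ler_pM.
  - by apply: mulr_ge0; [lra|rewrite invr_ge0; lra].
  - by apply: mulr_ge0; [lra|rewrite invr_ge0; lra].
  - by rewrite ler_pdivrMr // mul1r expr2; nra.
  - by rewrite ler_pdivrMr //; nra.
lra.
Qed.

Lemma dFlog2_pair_shift_le c d : 0 <= c -> 0 <= d -> 0 < c + d ->
  \forall e \near 0^'+, `|dFlog2 (c + e) (d + e)| * `|dFlog2 (d + e) (c + e)|
     <= (c + d) / e + (`|dFlog2 c d| + 1) * (`|dFlog2 d c| + 1).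
Proof.
rewrite le_eqVlt => /predU1P[<-|c0] d0 cd0.
  rewrite add0r in cd0; near=> e; have e0 : 0 < e by near: e; exact: nbhs_right_gt.
  rewrite !add0r; apply: le_trans (dFlog2_shift0_mul_le cd0 e0 _) _.
    by near: e; exact: ln1D_div_ge_near0.
  by rewrite lerDl.
move: d0; rewrite le_eqVlt => /predU1P[<-|d0].
  near=> e; have e0 : 0 < e by near: e; exact: nbhs_right_gt.
  rewrite add0r addr0 mulrC; apply: le_trans (dFlog2_shift0_mul_le c0 e0 _) _.
    by near: e; exact: ln1D_div_ge_near0.
  by rewrite lerDl.
near=> e; have e0 : 0 < e by near: e; exact: nbhs_right_gt.
apply: le_trans (_ : _ <= (`|dFlog2 c d| + 1) * (`|dFlog2 d c| + 1)) _.
  by apply: ler_pM => //; near: e;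
    [exact: cvg_near_normr_le (dFlog2_shift_cvg c0 d0)
    |exact: cvg_near_normr_le (dFlog2_shift_cvg d0 c0)].
by rewrite lerDr divr_ge0 ?ltW ?addr_gt0.
Unshelve. all: by end_near.
Qed.

Lemma dFlog1_shift0E c e : 0 < c -> 0 < e ->
  dFlog1 e (c + e) = (c / e - ln (1 + c / e)) / ln (1 + c / e) ^+ 2.
Proof.
move=> c0 e0; have neq : (e == c + e) = false.
  by rewrite eq_sym -subr_eq0 addrK gt_eqF.
have r_eq : (c + e) / e = 1 + c / e by rewrite mulrDl divff ?gt_eqF // addrC.
by rewrite /dFlog1 neq /= r_eq; congr (_ / _); ring.
Qed.

Lemma ln1D_div_le c d e : 0 < d -> d <= c -> 0 < e ->
  ln (1 + c / e) <= ln (1 + d / e) + ln (c / d).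
Proof.
move=> d0 dc e0; have c0 : 0 < c by lra.
have cd1 : 1 <= c / d by rewrite ler_pdivlMr // mul1r.
rewrite -lnM ?posrE ?addr_gt0 ?divr_gt0 //.
rewrite ler_ln ?posrE ?mulr_gt0 ?addr_gt0 ?divr_gt0 ?invr_gt0 //.
have -> : (1 + d / e) * (c / d) = c / d + c / e by field; rewrite !gt_eqF.
by rewrite lerD2r.
Qed.

(* Only the [x / ln (1 + x) ^+ 2] parts contribute; the last hypothesis keeps
   [ln (1 + a / e)] and [ln (1 + b / e)] comparable. *)
Lemma dFlog1_shift0_sub_ge (a b : R) e : 0 < b -> b < a -> 0 < e ->
  2 * b * ln (1 + a / e) ^+ 2 <= (a + b) * ln (1 + b / e) ^+ 2 ->
  (a - b) / e / (2 * ln (1 + a / e) ^+ 2) <= dFlog1 e (a + e) - dFlog1 e (b + e).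
Proof.
move=> b0 ba e0 close; have a0 : 0 < a by lra.
rewrite !dFlog1_shift0E //.
have Lb0 : 0 < ln (1 + b / e) by rewrite ln_gt0 // ltrDl divr_gt0.
have LbLa : ln (1 + b / e) <= ln (1 + a / e).
  by rewrite ler_ln ?posrE ?addr_gt0 ?divr_gt0 // lerD2l ler_pM2r ?invr_gt0 ?ltW.
move: close LbLa Lb0; set La := ln (1 + a / e); set Lb := ln (1 + b / e).
move=> close LbLa Lb0.
have close' : 2 * (b / e) * La ^+ 2 <= (a / e + b / e) * Lb ^+ 2.
  rewrite (_ : 2 * (b / e) * La ^+ 2 = 2 * b * La ^+ 2 / e); last by ring.
  rewrite (_ : (a / e + b / e) * Lb ^+ 2 = (a + b) * Lb ^+ 2 / e); last by ring.
  by rewrite ler_pM2r ?invr_gt0.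
rewrite -subr_ge0.
have -> : (a / e - La) / La ^+ 2 - (b / e - Lb) / Lb ^+ 2 - (a - b) / e / (2 * La ^+ 2)
    = ((a / e + b / e) * Lb ^+ 2 - 2 * (b / e) * La ^+ 2 + 2 * La * Lb * (La - Lb))
      / (2 * La ^+ 2 * Lb ^+ 2).
  by field; rewrite ?gt_eqF //; lra.
apply: divr_ge0; last by rewrite !mulr_ge0 ?exprn_ge0 //; lra.
have : 0 <= 2 * La * Lb * (La - Lb) by rewrite !mulr_ge0 //; lra.
lra.
Qed.

Lemma ln1D_div_sqr_close_near0 (a b : R) : 0 < b -> b < a ->
  \forall e \near 0^'+, 2 * b * ln (1 + a / e) ^+ 2 <= (a + b) * ln (1 + b / e) ^+ 2.
Proof.
move=> b0 ba; set D := ln (a / b).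
have D0 : 0 <= D by apply: ln_ge0; rewrite ler_pdivlMr // mul1r ltW.
near=> e.
have e0 : 0 < e by near: e; exact: nbhs_right_gt.
have Lb1 : 1 <= ln (1 + b / e) by near: e; exact: ln1D_div_ge_near0.
have LbK : (4 * b * D + 2 * b * D ^+ 2) / (a - b) <= ln (1 + b / e).
  by near: e; exact: ln1D_div_ge_near0.
have LaD := ln1D_div_le b0 (ltW ba) e0.
have La0 : 0 <= ln (1 + a / e) by rewrite ln_ge0 // lerDl divr_ge0 ?ltW //; lra.
move: LbK LaD La0 Lb1; rewrite ler_pdivrMr ?subr_gt0 // -/D.
set La := ln (1 + a / e); set Lb := ln (1 + b / e) => LbK LaD La0 Lb1.
have LaLb : La ^+ 2 <= (Lb + D) ^+ 2 by rewrite lerXn2r ?nnegrE //; lra.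
have DLb : 2 * b * D ^+ 2 <= 2 * b * D ^+ 2 * Lb.
  by rewrite ler_peMr // !mulr_ge0 ?exprn_ge0 //; lra.
nra.
Unshelve. all: by end_near.
Qed.

Lemma ln_pow4_le_sqrt (y : R) : 1 <= y -> ln y ^+ 4 <= 8 ^+ 4 * Num.sqrt y.
Proof.
move=> y1; set w := Num.sqrt (Num.sqrt (Num.sqrt y)).
have w0 : 0 < w by rewrite !sqrtr_gt0; lra.
have w4 : w ^+ 4 = Num.sqrt y.
  by rewrite -[4%N]/(2 * 2)%N exprM !sqr_sqrtr ?sqrtr_ge0.
have lnw : ln y = 8 * ln w.
  rewrite -[in LHS](sqr_sqrtr (ltW (lt_le_trans ltr01 y1))) -w4 -exprM.
  by rewrite lnXn // mulr_natl.
have lnw0 : 0 <= ln w by move: (ln_ge0 y1); rewrite lnw; lra.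
rewrite lnw -w4 exprMn ler_pM2l ?exprn_gt0 //.
by rewrite lerXn2r ?nnegrE // ltW // ln_sublinear.
Qed.

Lemma ln1D_div_pow4_le c e : 0 < c -> 0 < e -> e <= 1 ->
  ln (1 + c / e) ^+ 4 <= 8 ^+ 4 * (1 + c) * Num.sqrt e^-1.
Proof.
move=> c0 e0 e1; have ie1 : 1 <= e^-1 by rewrite invf_ge1.
apply: le_trans (ln_pow4_le_sqrt _) _; first by rewrite lerDl divr_ge0 ?ltW.
rewrite -mulrA ler_pM2l ?exprn_gt0 //.
have -> : (1 + c) * Num.sqrt e^-1 = Num.sqrt ((1 + c) ^+ 2 * e^-1).
  by rewrite sqrtrM ?sqr_ge0 // sqrtr_sqr ger0_norm //; lra.
have ie0 : 0 <= e^-1 by rewrite invr_ge0 ltW.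
rewrite ler_sqrt; last by rewrite mulr_ge0 ?sqr_ge0.
have ce0 : 0 <= c * e^-1 by rewrite mulr_ge0 // ltW.
have c2e0 : 0 <= c ^+ 2 * e^-1 by rewrite mulr_ge0 ?sqr_ge0.
have -> : (1 + c) ^+ 2 * e^-1 = e^-1 + 2 * (c * e^-1) + c ^+ 2 * e^-1 by ring.
lra.
Qed.

Lemma dFlog1_shift0_sub_sqr_ge (p q : R) : 0 < p -> 0 < q -> p != q ->
  exists2 c, 0 < c & \forall e \near 0^'+,
    c * Num.sqrt e^-1 ^+ 3 <= (dFlog1 e (p + e) - dFlog1 e (q + e)) ^+ 2.
Proof.
move=> p0 q0 neq_pq; wlog qp : p q p0 q0 neq_pq / q < p.
  move=> qp_case; have := neq_pq; rewrite neq_lt => /orP[pq|]; last exact: qp_case.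
  have [c c0 ev] := qp_case q p q0 p0 (negbT (gt_eqF pq)) pq.
  by exists c => //; apply: filterS ev => e; rewrite -sqrrN opprB.
exists ((p - q) ^+ 2 / 4 / (8 ^+ 4 * (1 + p))).
  by rewrite !divr_gt0 ?exprn_gt0 ?mulr_gt0 ?subr_gt0 //; lra.
near=> e.
have e0 : 0 < e by near: e; exact: nbhs_right_gt.
have e1 : e <= 1 by near: e; apply: nbhs_right_le; exact: ltr01.
have close : 2 * q * ln (1 + p / e) ^+ 2 <= (p + q) * ln (1 + q / e) ^+ 2.
  by near: e; exact: ln1D_div_sqr_close_near0.
have := dFlog1_shift0_sub_ge q0 qp e0 close.
have := ln1D_div_pow4_le p0 e0 e1.
have Lp0 : 0 < ln (1 + p / e) by rewrite ln_gt0 // ltrDl divr_gt0.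
have s0 : 0 < Num.sqrt e^-1 by rewrite sqrtr_gt0 invr_gt0.
have ies : e^-1 = Num.sqrt e^-1 ^+ 2 by rewrite sqr_sqrtr // invr_ge0 ltW.
move: (Num.sqrt e^-1) s0 ies Lp0 => s s0 ies; set L := ln (1 + p / e) => Lp0 L4 diff.
have diff0 : 0 <= (p - q) / e / (2 * L ^+ 2).
  by rewrite !divr_ge0 ?mulr_ge0 ?sqr_ge0 ?subr_ge0 // ltW.
apply: le_trans (_ : _ <= ((p - q) / e / (2 * L ^+ 2)) ^+ 2) _; last first.
  by rewrite lerXn2r ?nnegrE //; exact: le_trans diff.
rewrite ies (_ : ((p - q) * s ^+ 2 / (2 * L ^+ 2)) ^+ 2
  = (p - q) ^+ 2 / 4 * (s ^+ 4 / L ^+ 4)); last by field; rewrite gt_eqF.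
have K0 : 0 < 8 ^+ 4 * (1 + p) :> R by rewrite mulr_gt0 ?exprn_gt0 //; lra.
have key : s ^+ 3 / (8 ^+ 4 * (1 + p)) <= s ^+ 4 / L ^+ 4.
  rewrite ler_pdivrMr // mulrAC ler_pdivlMr ?exprn_gt0 //.
  apply: le_trans (_ : _ <= s ^+ 3 * (8 ^+ 4 * (1 + p) * s)) _.
    by apply: ler_wpM2l L4; rewrite exprn_ge0 // ltW.
  by rewrite le_eqVlt; apply/orP; left; apply/eqP; ring.
rewrite mulrAC -mulrA ler_wpM2l // divr_ge0 ?sqr_ge0 //.
Unshelve. all: by end_near.
Qed.

End LogMeanDerivatives.

Lemma cubic_dominates (R : realFieldType) (c K1 K2 M : R) : 0 < c ->
  exists S, forall s, S <= s -> M <= c * s ^+ 3 - K1 * s ^+ 2 - K2.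
Proof.
move=> c0; exists (1 + (`|K1| + `|K2| + `|M|) / c) => s Ss.
have K0 : 0 <= `|K1| + `|K2| + `|M| by rewrite !addr_ge0.
have s1 : 1 <= s by apply: le_trans Ss; rewrite lerDl divr_ge0 // ltW.
have cs : `|K1| + `|K2| + `|M| <= c * s.
  by rewrite mulrC -ler_pdivrMr //; apply: le_trans Ss; lra.
have s2 : 1 <= s ^+ 2 by rewrite expr2; nra.
have := ler_norm K1; have := ler_norm K2; have := ler_norm M.
have := normr_ge0 K1; have := normr_ge0 K2; have := normr_ge0 M.
rewrite (_ : c * s ^+ 3 = s ^+ 2 * (c * s)); last by ring.
nra.
Qed.

Lemma sqrt_inv_ge_near0 (R : realType) (S : R) :
  \forall e \near 0^'+, S <= Num.sqrt e^-1.
Proof.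
near=> e; have e0 : 0 < e by near: e; exact: nbhs_right_gt.
have eS : e < (1 + S ^+ 2)^-1.
  by near: e; apply: nbhs_right_lt; rewrite invr_gt0 ltr_pwDl ?sqr_ge0.
have S1 : 0 < 1 + S ^+ 2 by rewrite ltr_pwDl ?sqr_ge0.
have Se : 1 + S ^+ 2 < e^-1 by rewrite -[1 + _]invrK ltf_pV2 ?posrE ?invr_gt0.
apply: le_trans (ler_norm S) _; rewrite -sqrtr_sqr ler_sqrt; first lra.
by rewrite invr_ge0 ltW.
Unshelve. all: by end_near.
Qed.

Lemma cubic_sqrt_inv_ge_near0 (R : realType) (c K1 K2 M : R) : 0 < c ->
  \forall e \near 0^'+, M <= c * Num.sqrt e^-1 ^+ 3 - K1 * e^-1 - K2.
Proof.
move=> c0; have [S cubic] := cubic_dominates K1 K2 M c0.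
near=> e; have e0 : 0 < e by near: e; exact: nbhs_right_gt.
rewrite -[in K1 * _](@sqr_sqrtr _ e^-1); last by rewrite invr_ge0 ltW.
apply: cubic.
by near: e; exact: sqrt_inv_ge_near0.
Unshelve. all: by end_near.
Qed.

Section JacobianEntries.
Variables (R : realType) (N : nat) (h : R).
Hypotheses (N2 : (2 < N)%N) (h0 : 0 < h).

Lemma Dmat_diag (a : 'I_N) : Dmat N h a a = 0.
Proof.
have N1 : (1 < N)%N by apply: ltnW.
by rewrite mxE eq_sym (negPf (ordS_neq a N1)) eq_sym (negPf (ord_pred_neq a N1)).
Qed.

Lemma Dmat_norm_le (a b : 'I_N) : `|Dmat N h a b| <= (2 * h)^-1.
Proof.
have h2 : 0 <= (2 * h)^-1 by rewrite invr_ge0 mulr_ge0 // ltW.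
by rewrite mxE; case: ifP => _; [|case: ifP => _]; rewrite ?normrN ?normr0 ?ger0_norm.
Qed.

Lemma Jac_offdiag_mul_le (u : 'I_N -> R) (a b : 'I_N) : a != b ->
  `|Jac h u a b * Jac h u b a|
    <= h ^- 2 * (`|dFlog2 (u a) (u b)| * `|dFlog2 (u b) (u a)|).
Proof.
have entry_le c d : c != d -> `|Jac h u c d| <= h^-1 * `|dFlog2 (u c) (u d)|.
  move=> cd; rewrite mxE (negPf cd) mulr0 mul0r subr0 !normrM normrN normr_nat.
  rewrite ler_wpM2r // (_ : h^-1 = 2 * (2 * h)^-1); last by field; rewrite gt_eqF.
  by rewrite ler_wpM2l ?Dmat_norm_le.
move=> ab; rewrite normrM (_ : h ^- 2 * _ = h^-1 * `|dFlog2 (u a) (u b)| *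
  (h^-1 * `|dFlog2 (u b) (u a)|)); last by rewrite -exprVn; ring.
by rewrite ler_pM ?entry_le // eq_sym.
Qed.

Lemma Jac_diag (u : 'I_N -> R) (k : 'I_N) :
  Jac h u k k = - h^-1 * (dFlog1 (u k) (u (ordS k)) - dFlog1 (u k) (u (ord_pred k))).
Proof.
have Sk_Pk := ordS_neq_ord_pred k N2.
rewrite mxE Dmat_diag eqxx mulr0 mul0r sub0r mulr1.
rewrite (bigD1 (ordS k)) //= (bigD1 (ord_pred k)) 1?eq_sym //=.
rewrite big1 ?addr0 => [|j /andP[jS jP]]; last first.
  by rewrite mxE (negPf jP) (negPf jS) mul0r.
rewrite !mxE eqxx eq_sym (negPf Sk_Pk) eqxx.
by field; rewrite gt_eqF.
Qed.

End JacobianEntries.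

Section TraceBlowUp.
Variables (R : realType) (N : nat) (h : R) (i : 'I_N) (u0 : 'I_N -> R).
Hypotheses (N2 : (2 < N)%N) (h0 : 0 < h).
Hypotheses (u0i : u0 i = 0) (u0_gt0 : forall k, k != i -> 0 < u0 k).
Hypothesis u0_neq : u0 (ordS i) != u0 (ord_pred i).

Let J e := Jac h (fun k => u0 k + e).

Lemma Jac_shift_diag_sqr_ge : exists2 c, 0 < c &
  \forall e \near 0^'+, c * Num.sqrt e^-1 ^+ 3 <= J e i i ^+ 2.
Proof.
have N1 : (1 < N)%N by apply: ltnW.
have [c c0 ev] := dFlog1_shift0_sub_sqr_ge (u0_gt0 (ordS_neq i N1))
  (u0_gt0 (ord_pred_neq i N1)) u0_neq.
exists (h ^- 2 * c); first by rewrite mulr_gt0 ?invr_gt0 ?exprn_gt0.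
apply: filterS ev => e ev; rewrite /J Jac_diag // u0i add0r exprMn sqrrN exprVn.
by rewrite -mulrA ler_pM2l ?invr_gt0 ?exprn_gt0.
Qed.

Lemma Jac_shift_offdiag_le : exists K1 K2, \forall e \near 0^'+,
  \sum_a \sum_(b | b != a) `|J e a b * J e b a| <= K1 * e^-1 + K2.
Proof.
have u0_ge0 k : 0 <= u0 k by have [->|/u0_gt0/ltW] := eqVneq k i; rewrite ?u0i.
pose K a b := (`|dFlog2 (u0 a) (u0 b)| + 1) * (`|dFlog2 (u0 b) (u0 a)| + 1).
exists (h ^- 2 * \sum_a \sum_(b | b != a) (u0 a + u0 b)),
       (h ^- 2 * \sum_a \sum_(b | b != a) K a b).
have ev : \forall e \near 0^'+, forall a b, b != a ->
    `|dFlog2 (u0 a + e) (u0 b + e)| * `|dFlog2 (u0 b + e) (u0 a + e)|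
      <= (u0 a + u0 b) / e + K a b.
  apply: filter_forall => a; apply: filter_forall => b.
  have [->|ba] := eqVneq b a; first by apply: nearW.
  have ab0 : 0 < u0 a + u0 b.
    have [ai|/u0_gt0 ?] := eqVneq a i; last by rewrite ltr_pwDl.
    by rewrite ltr_wpDl ?u0_gt0 // -ai.
  by apply: filterS (dFlog2_pair_shift_le (u0_ge0 a) (u0_ge0 b) ab0) => e + _.
apply: filterS ev => e ev.
rewrite !mulr_sumr mulr_suml -big_split /=; apply: ler_sum => a _.
rewrite !mulr_sumr mulr_suml -big_split /=; apply: ler_sum => b ba.
have ab : a != b by rewrite eq_sym.
apply: le_trans (Jac_offdiag_mul_le h0 _ ab) _.
rewrite -mulrA -mulrDr; apply: ler_wpM2l (ev a b ba).
by rewrite invr_ge0 exprn_ge0 // ltW.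
Qed.

Lemma trace_Jac_shift_sqr_cvgy : `|\tr (J e *m J e)| @[e --> 0^'+] --> +oo.
Proof.
have [c c0 diag] := Jac_shift_diag_sqr_ge.
have [K1 [K2 offdiag]] := Jac_shift_offdiag_le.
apply/cvgryPge => M; near=> e.
apply: le_trans (ler_norm _); apply: le_trans (mxtrace_sqr_ge _ i).
have : c * Num.sqrt e^-1 ^+ 3 <= J e i i ^+ 2 by near: e.
have : \sum_a \sum_(b | b != a) `|J e a b * J e b a| <= K1 * e^-1 + K2 by near: e.
have : M <= c * Num.sqrt e^-1 ^+ 3 - K1 * e^-1 - K2.
  by near: e; exact: cubic_sqrt_inv_ge_near0.
lra.
Unshelve. all: by end_near.
Qed.

End TraceBlowUp.

Section PerturbedState.
Variables (R : realType) (N : nat) (h : R) (i : 'I_N) (dp dm : R) (U : 'I_N -> R).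
Hypotheses (N2 : (2 < N)%N) (h0 : 0 < h) (dp0 : 0 < dp) (dm0 : 0 < dm).
Hypothesis U0 : forall k, k != i -> k != ordS i -> k != ord_pred i -> 0 < U k.

Local Notation u0 := (ueps h i dp dm U 0).

Lemma uepsE e : ueps h i dp dm U e = fun k => u0 k + e.
Proof.
apply/funext => k; rewrite /ueps.
by do ![case: ifP => _]; rewrite ?add0r ?addr0.
Qed.

Lemma ueps0_ordS : u0 (ordS i) = dp * h.
Proof. by rewrite /ueps (negPf (ordS_neq i (ltnW N2))) eqxx addr0. Qed.

Lemma ueps0_ord_pred : u0 (ord_pred i) = dm * h.
Proof.
rewrite /ueps (negPf (ord_pred_neq i (ltnW N2))) eq_sym.
by rewrite (negPf (ordS_neq_ord_pred i N2)) eqxx addr0.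
Qed.

Lemma ueps0_gt0 k : k != i -> 0 < u0 k.
Proof.
move=> ki; rewrite /ueps (negPf ki) !addr0.
by case: ifP => kS; [|case: ifP => kP]; rewrite ?mulr_gt0 ?U0 ?kS ?kP.
Qed.

End PerturbedState.

Theorem mainTheorem12 (R : realType) (N : nat) (hN : (3 <= N)%N) (h : R)
  (hh : 0 < h) (i : 'I_N) (dp dm : R) (hdp : 0 < dp) (hdm : 0 < dm)
  (hd : dp != dm) (U : 'I_N -> R)
  (hU : forall k : 'I_N, k != i -> k != ordS i -> k != ord_pred i -> 0 < U k) :
  (`| \tr (Jac h (ueps h i dp dm U eps) *m Jac h (ueps h i dp dm U eps)) |
     @[eps --> 0^'+] --> +oo)
  /\ (forall eps : R, 0 < eps ->
        Num.sqrt (`| \tr (Jac h (ueps h i dp dm U eps) *m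
                          Jac h (ueps h i dp dm U eps)) | / N%:R)
        <= spectral_radius (Jac h (ueps h i dp dm U eps)))
  /\ (spectral_radius (Jac h (ueps h i dp dm U eps)) @[eps --> 0^'+] --> +oo).
Proof.
have N0 : (0 < N)%N by apply: leq_trans hN.
have trace_cvgy : `| \tr (Jac h (ueps h i dp dm U eps) *m
    Jac h (ueps h i dp dm U eps)) | @[eps --> 0^'+] --> +oo.
  under eq_fun do rewrite uepsE.
  apply: (trace_Jac_shift_sqr_cvgy (i := i)) => //.
  - by rewrite /ueps eqxx.
  - exact: ueps0_gt0.
  - rewrite ueps0_ordS ?ueps0_ord_pred //.
    by apply: contra hd => /eqP/(mulIf (lt0r_neq0 hh))->.
split=> //; split; first by move=> eps _; exact: sqrt_trace_sqr_le_spectral_radius.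
exact: spectral_radius_cvgy.
Qed.
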